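(* Let $m\in\mathbb{N}$ and $w>0$, and let $(n_k)_{k=1}^\infty$ be the increasing sequence of all $n\in\mathbb{N}$ with $(\varphi\circ\eta_w)(n)=m$. Then $(n_k)_{k=1}^\infty$ is a completely deterministic sequence.
   Context: $\mathbb{N}=\{1,2,\ldots\}$. Define $L_w(1):=1$ and $L_w(n):=\lceil w(L_w(1)+\cdots+L_w(n-1))\rceil$ for $n\ge2$. Let $\beta_n:=\max\{k: k(k+1)/2\le n\}$, $\varphi(n):=n-\beta_n(\beta_n+1)/2$, and $\eta_w(n):=\max\{k:\sum_{j=1}^k L_w(j)\le n\}$. The indicator sequence of an increasing sequence $(n_k)\subset\mathbb{N}$ is $(\omega_n)_{n\ge1}\in\{0,1\}^{\mathbb{N}}$ with $\omega_n=1$ iff $n=n_k$ for some $k$. A binary sequence $(\omega_n)$ is completely deterministic if for every $\varepsilon>0$ there is $K\in\mathbb{N}$ such that, after removing from $(\omega_n)$ a set of positions of density less than $\varepsilon$, what remains can be covered by $K$-blocks (words of length $K$) taken from a collection $\mathcal{C}$ with $|\mathcal{C}|<2^{\varepsilon K}$. An increasing sequence of positive integers is completely deterministic if its indicator sequence is. *)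

From Stdlib Require Import Reals ZArith.
From mathcomp Require Import all_boot.

Set Implicit Arguments.
Unset Strict Implicit.
Unset Printing Implicit Defensive.

Definition ceilZ (x : R) : Z := (- Int_part (- x))%Z.

(* psumL w n = L_w(1) + ... + L_w(n), computed by the recursion
   L_w(1) = 1, L_w(n+1) = ceil (w * (L_w(1)+...+L_w(n))) for n >= 1. *)
Fixpoint psumL (w : R) (n : nat) : nat :=
  match n with
  | 0 => 0
  | n'.+1 => psumL w n' + (if n' is 0 then 1 else Z.to_nat (ceilZ (w * INR (psumL w n'))))
  end.

(* L_w(n) for n >= 1 (L_w(0) := 0 is an unused junk value):
   L_w(1) = 1 and L_w(n) = ceil (w * (L_w(1)+...+L_w(n-1))) for n >= 2.
   By construction psumL w n = \sum_(1 <= j < n.+1) Lw w j. *)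
Definition Lw (w : R) (n : nat) : nat :=
  match n with
  | 0 => 0
  | 1 => 1
  | n'.+1 => Z.to_nat (ceilZ (w * INR (psumL w n')))
  end.

(* beta_n = max { k : k(k+1)/2 <= n }  (any such k satisfies k <= n). *)
Definition beta (n : nat) : nat :=
  \max_(k < n.+1 | (k * (k + 1)) %/ 2 <= n) k.

Definition phi (n : nat) : nat := n - (beta n * (beta n + 1)) %/ 2.

(* eta_w(n) = max { k : L_w(1)+...+L_w(k) <= n }  (since L_w(j) >= 1 for
   w > 0, any such k satisfies k <= n). *)
Definition eta (w : R) (n : nat) : nat :=
  \max_(k < n.+1 | \sum_(1 <= j < k.+1) Lw w j <= n) k.

(* The set S of positions (in N = {1,2,...}) not covered by the blocks
   [a, a+K) with a in [starts]: n is covered iff n - i is a start for some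
   0 <= i < K with i < n. *)
Definition covered (K : nat) (starts : nat -> bool) (n : nat) : bool :=
  [exists i : 'I_K, (i < n) && starts (n - i)].

(* Upper density of the positions n >= 1 with [~~ P n] is < eps:
   there is delta < eps with #{1 <= n <= N : ~~ P n} <= delta * N for all
   large N. *)
Definition upper_density_lt (S : nat -> bool) (eps : R) : Prop :=
  exists delta : R, (Rlt delta eps) /\
    exists N0 : nat, forall N : nat, N0 <= N ->
      Rle (INR (count S (iota 1 N))) (Rmult delta (INR N)).

(* Completely deterministic binary sequence (omega_n)_{n >= 1}
   (the value omega 0 is ignored): for every eps > 0 there is K >= 1, a
   collection C of K-words with |C| < 2^(eps K), and pairwise disjoint
   K-blocks [a, a+K) (a >= 1) each of which reads a word of C, such that the
   set of uncovered positions has (upper) density < eps. *)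
Definition completely_deterministic (omega : nat -> bool) : Prop :=
  forall eps : R, Rlt 0 eps ->
  exists K : nat, 0 < K /\
  exists (C : {set K.-tuple bool}) (starts : nat -> bool),
    Rlt (INR #|C|) (Rpower 2 (Rmult eps (INR K))) /\
    (forall a, starts a -> 0 < a) /\
    (forall a b, starts a -> starts b -> a < b -> a + K <= b) /\
    (forall a, starts a -> [tuple omega (a + i) | i < K] \in C) /\
    upper_density_lt (fun n => ~~ covered K starts n) eps.

(* The value of phi (eta_w n) can only change when n passes a partial sum
   L_w(1) + ... + L_w(k).  Since L_w(k+1) >= w (L_w(1) + ... + L_w(k)) >= w k,
   these partial sums grow faster than any linear function, so the jump
   points have density zero.  Cut the positions into aligned blocks of length
   K with 1/K < eps and keep the blocks without a jump: each reads a constant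
   word, so two words suffice, and since a jump spoils only the block
   containing it, the discarded positions still have density zero.  Nothing
   about phi or m is used: every sequence g (eta_w n) is completely
   deterministic. *)
From Stdlib Require Import Reals Lra Lia Classical.
From mathcomp Require Import all_boot zify.

Set Implicit Arguments.
Unset Strict Implicit.
Unset Printing Implicit Defensive.

Lemma count_le_sum_count (T I : eqType) (a : pred T) (b : I -> pred T)
    (s : seq T) (r : seq I) :
  (forall x, x \in s -> a x -> exists2 i, i \in r & b i x) ->
  count a s <= \sum_(i <- r) count (b i) s.
Proof.
elim: s => [|x s IH] cover /=; first by rewrite big1.
rewrite big_split /=; apply: leq_add; last first.
  by apply: IH => y ys; apply: cover; rewrite in_cons ys orbT.
case ax: (a x) => //; have [i ir bix] := cover x (mem_head _ _) ax.
by rewrite (big_rem i ir) /= bix.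
Qed.

Lemma count_in_window (P : pred nat) (s : seq nat) lo len : uniq s ->
  (forall x, P x -> lo <= x < lo + len) -> count P s <= len.
Proof.
move=> s_uniq window; rewrite -size_filter -[len in _ <= len](size_iota lo).
apply: uniq_leq_size; first exact: filter_uniq.
by move=> x; rewrite mem_filter mem_iota => /andP[/window].
Qed.

Lemma mod_eq_gap K a b : 0 < K -> a %% K = b %% K -> a < b -> a + K <= b.
Proof.
move=> K_gt0 ab a_lt_b.
have : K %| b - a by rewrite -eqn_mod_dvd ?ab // ltnW.
by move/(dvdn_leq _); rewrite subn_gt0 => /(_ a_lt_b); lia.
Qed.

Lemma Rpower2_gt2 x : Rlt 1 x -> Rlt 2 (Rpower 2 x).
Proof. by move=> x_gt1; rewrite -[X in Rlt X _]Rpower_1; [apply: Rpower_lt|]; lra. Qed.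

Lemma INR_le_inv_mul K c N : 0 < K -> K * c <= N -> Rle (INR c) (Rmult (/ INR K) (INR N)).
Proof.
move=> K_gt0 /leP/le_INR; rewrite mult_INR => KcN.
have K_pos : Rlt 0 (INR K) by apply: lt_0_INR; apply/ltP.
apply: (Rmult_le_reg_l (INR K)) => //.
by rewrite -Rmult_assoc Rinv_r ?Rmult_1_l //; apply: Rgt_not_eq.
Qed.

Definition superlinear (f : nat -> nat) : Prop :=
  forall M, exists k0, forall d, d * M <= f (k0 + d).

Lemma superlinear_index_bound f M : superlinear f -> 0 < M ->
  exists k0, forall X j, f j < X -> j <= k0 + X %/ M.
Proof.
move=> f_sup M_gt0; have [k0 f_ge] := f_sup M; exists k0 => X j fj_lt.
case: (leqP j k0) => [j_le | k0_lt_j]; first by rewrite (leq_trans j_le) ?leq_addr.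
have := f_ge (j - k0); rewrite subnKC ?(ltnW k0_lt_j) // => f_ge_j.
have : j - k0 <= X %/ M by rewrite leq_divRL // (leq_trans f_ge_j) // ltnW.
by rewrite leq_subLR.
Qed.

Definition constant_words K : {set K.-tuple bool} :=
  [set [tuple true | _ < K]; [tuple false | _ < K]].

Lemma card_constant_words K : #|constant_words K| <= 2.
Proof. by rewrite cards2; case: (_ != _). Qed.

Lemma constant_tuple_in_words K (t : 'I_K -> bool) b :
  (forall i, t i = b) -> [tuple t i | i < K] \in constant_words K.
Proof. by move=> tb; rewrite (@eq_mktuple _ _ t (fun=> b) tb) !inE; case: (b); rewrite eqxx ?orbT. Qed.

Definition aligned_constant_starts K (omega : nat -> bool) (a : nat) : bool :=
  [&& 0 < a, a %% K == 1 %% K & [tuple omega (a + i) | i < K] \in constant_words K].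

Section SparseJumps.

Variables (omega : nat -> bool) (f : nat -> nat).
Hypothesis omega_steady :
  forall n, 0 < n -> (forall k, f k <> n.+1) -> omega n.+1 = omega n.

Lemma omega_run a i : 0 < a -> (forall k, ~~ (a < f k <= a + i)) ->
  omega (a + i) = omega a.
Proof.
move=> a_gt0; elim: i => [|i IH] no_jump; first by rewrite addn0.
have step : omega (a + i).+1 = omega (a + i).
  apply: omega_steady => [|k fk]; first lia.
  by move: (no_jump k); rewrite fk; lia.
by rewrite addnS step; apply: IH => k; apply: contra (no_jump k); lia.
Qed.

Variable K : nat.
Hypothesis K_gt0 : 0 < K.

Let starts := aligned_constant_starts K omega.

Lemma uncovered_near_jump x : 0 < x -> ~~ covered K starts x ->
  exists j, x < f j + K /\ f j < x + K.
Proof.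
move=> x_gt0 uncov; apply: NNPP => far; move/negP: uncov; apply.
set r := (x - 1) %% K; have r_lt : r < K := ltn_pmod _ K_gt0.
have r_lt_x : r < x by have := leq_mod (x - 1) K; lia.
have start_mod : (x - r) %% K = 1 %% K.
  have -> : x - r = (x - 1) %/ K * K + 1 by have := divn_eq (x - 1) K; lia.
  by rewrite modnMDl.
have run (i : 'I_K) : omega (x - r + i) = omega (x - r).
  apply: omega_run; first lia.
  move=> k; apply/negP => /andP[lo hi]; apply: far; exists k.
  by have := ltn_ord i; lia.
apply/existsP; exists (Ordinal r_lt); rewrite /= r_lt_x /starts.
by rewrite /aligned_constant_starts start_mod eqxx (constant_tuple_in_words run) andbT; lia.
Qed.

Lemma count_uncovered_le N B : (forall j, f j < N + K -> j < B) ->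
  count (fun n => ~~ covered K starts n) (iota 1 N) <= B * (2 * K).
Proof.
move=> index_lt.
pose near j x := (x < f j + K) && (f j < x + K).
apply: (leq_trans (@count_le_sum_count _ _ _ near _ (index_iota 0 B) _)).
  move=> x; rewrite mem_iota => /andP[x_ge1 x_le] uncov.
  have [j [lo hi]] := uncovered_near_jump x_ge1 uncov.
  by exists j; rewrite ?mem_index_iota /near; [apply: index_lt|apply/andP]; lia.
rewrite -[B in B * _]subn0 -sum_nat_const_nat; apply: leq_sum => j _.
by apply: (count_in_window (lo := f j + 1 - K)) (iota_uniq _ _) _ => x /andP; lia.
Qed.

End SparseJumps.

Theorem completely_deterministic_of_superlinear_jumps omega f :
  (forall n, 0 < n -> (forall k, f k <> n.+1) -> omega n.+1 = omega n) ->
  superlinear f -> completely_deterministic omega.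
Proof.
move=> omega_steady f_sup eps eps_gt0.
have [K [invK_lt /ltP K_gt0]] := archimed_cor1 eps eps_gt0.
have K_pos : Rlt 0 (INR K) by apply: lt_0_INR; apply/ltP.
(* Gaps of size 4 K^2 leave at most (N + K) / (4 K^2) + k0 + 1 jumps below
   N + K, and their 2K-windows then cover at most N / K positions. *)
have [k0 index_bound] := superlinear_index_bound (M := 4 * K * K) f_sup ltac:(lia).
exists K; split => //; exists (constant_words K), (aligned_constant_starts K omega).
split.
  apply: Rle_lt_trans (Rpower2_gt2 _).
    by apply: (le_INR _ 2); apply/leP; apply: card_constant_words.
  have := Rmult_lt_compat_r (INR K) _ _ K_pos invK_lt.
  by rewrite Rinv_l; [lra | apply: Rgt_not_eq].
split; first by move=> a /and3P[].
split.
  move=> a b /and3P[_ /eqP a_mod _] /and3P[_ /eqP b_mod _].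
  by apply: mod_eq_gap; rewrite ?a_mod.
split; first by move=> a /and3P[].
exists (Rinv (INR K)); split => //; exists (4 * K * K * (k0 + 1) + K) => N N_ge.
apply: INR_le_inv_mul => //.
apply: leq_trans (leq_mul (leqnn K) (count_uncovered_le omega_steady K_gt0
  (B := (k0 + (N + K) %/ (4 * K * K)).+1) _)) _.
  by move=> j /index_bound.
have := leq_divM (N + K) (4 * K * K).
move: ((N + K) %/ (4 * K * K)) => q; nia.
Qed.

Lemma ceilZ_ge x : Rle x (IZR (ceilZ x)).
Proof. by rewrite /ceilZ opp_IZR; have := base_Int_part (- x); lra. Qed.

Lemma IZR_le_INR_to_nat z : Rle (IZR z) (INR (Z.to_nat z)).
Proof. by rewrite INR_IZR_INZ; apply: IZR_le; lia. Qed.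

Lemma psumL_succ w k : psumL w k.+1 = psumL w k + Lw w k.+1.
Proof. by case: k. Qed.

Lemma sum_Lw w k : \sum_(1 <= j < k.+1) Lw w j = psumL w k.
Proof.
elim: k => [|k IH]; first by rewrite big_geq.
by rewrite big_nat_recr // IH psumL_succ.
Qed.

Lemma Lw_succ_ge w n : 0 < n -> Rle (Rmult w (INR (psumL w n))) (INR (Lw w n.+1)).
Proof. by case: n => // n _; apply: Rle_trans (ceilZ_ge _) (IZR_le_INR_to_nat _). Qed.

Section PartialSums.

Variable w : R.
Hypothesis w_gt0 : Rlt 0 w.

Lemma Lw_succ_gt0 k : k <= psumL w k -> 0 < Lw w k.+1.
Proof.
case: k => [//|k] k_le; apply/ltP/INR_lt; apply: Rlt_le_trans (Lw_succ_ge _ _) => //.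
by apply: Rmult_lt_0_compat => //; apply: lt_0_INR; apply/ltP; lia.
Qed.

Lemma psumL_ge_id k : k <= psumL w k.
Proof. by elim: k => [|k IH] //; rewrite psumL_succ; have := Lw_succ_gt0 IH; lia. Qed.

Lemma psumL_lt_succ k : psumL w k < psumL w k.+1.
Proof. by rewrite psumL_succ -addn1 leq_add2l Lw_succ_gt0 ?psumL_ge_id. Qed.

Lemma psumL_mono : {homo psumL w : i j / i <= j}.
Proof. exact: homo_leq leqnn leq_trans (fun k => ltnW (psumL_lt_succ k)). Qed.

Lemma psumL_superlinear : superlinear (psumL w).
Proof.
move=> M; have [k1 k1_gt] := INR_unbounded (Rdiv (INR M) w).
have M_le : Rle (INR M) (Rmult w (INR k1.+1)).
  have := Rmult_lt_compat_l w _ _ w_gt0 k1_gt.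
  by rewrite S_INR /Rdiv Rmult_comm Rmult_assoc Rinv_l; [lra | apply: Rgt_not_eq].
exists k1.+1; elim=> [|d IH]; first by rewrite mul0n.
rewrite addnS psumL_succ mulSn.
suff : M <= Lw w (k1.+1 + d).+1 by lia.
apply/leP/INR_le; apply: Rle_trans M_le (Rle_trans _ _ _ _ (Lw_succ_ge _ _)) => //.
apply: Rmult_le_compat_l; first lra.
by apply: le_INR; apply/leP; apply: leq_trans (psumL_ge_id _); rewrite leq_addr.
Qed.

Lemma eta_eq n k : psumL w k <= n < psumL w k.+1 -> eta w n = k.
Proof.
move=> /andP[lo hi]; apply/eqP; rewrite eqn_leq; apply/andP; split.
  apply/bigmax_leqP => i; rewrite sum_Lw => psum_le; rewrite leqNgt.
  by apply/negP => /psumL_mono; lia.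
have k_lt : k < n.+1 by have := psumL_ge_id k; lia.
by apply: (leq_bigmax_cond (Ordinal k_lt)); rewrite /= sum_Lw.
Qed.

Lemma psumL_bracket n : exists k, psumL w k <= n < psumL w k.+1.
Proof.
elim: n => [|n [k /andP[lo hi]]]; first by exists 0.
case: (ltnP n.+1 (psumL w k.+1)) => [n_lt | n_ge]; first by exists k; rewrite n_lt andbT; lia.
by exists k.+1; have := psumL_lt_succ k.+1; lia.
Qed.

Lemma eta_succ n : (forall k, psumL w k <> n.+1) -> eta w n.+1 = eta w n.
Proof.
move=> not_psum; have [k bracket] := psumL_bracket n.
rewrite (eta_eq bracket); apply: eta_eq; have := not_psum k.+1; lia.
Qed.

End PartialSums.

Theorem lemma4 (m : nat) (w : R) :
  0 < m -> Rlt 0 w ->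
  completely_deterministic (fun n => (0 < n) && (phi (eta w n) == m)).
Proof.
move=> _ w_gt0; apply: (completely_deterministic_of_superlinear_jumps (f := psumL w)).
  by move=> n n_gt0 not_psum; rewrite eta_succ // n_gt0.
exact: psumL_superlinear.
Qed.
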